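(* In the setting below, the limit $N=\lim_{t\to\infty}(S+tP)^{-1}$ satisfies $$N=S^{-1}-S^{-1}U(U^\top S^{-1}U)^{-1}U^\top S^{-1},$$ where $U^\top S^{-1}U$ is positive definite. In particular $N$ depends only on the sizes $p_i,q_i$ of the bipartition classes of the bipartite components of $G$ and on $s$.
   Context: Let $n\ge3$, $\ell>0$, $\alpha\ge(n-2)\ell$, $S=\alpha I_n+\ell\mathbf{1}_n\mathbf{1}_n^\top$. For a real matrix $P$, $\Delta_i(P)=|P_{ii}|-\sum_{j\ne i}|P_{ij}|$. A signless Laplacian is a real symmetric $n\times n$ matrix $P$ with $P_{ij}\in\{0,1\}$ for $i\ne j$, $P_{ii}\ge0$, and $\Delta_i(P)\in\{0,2\}$ for all $i$; its graph $G$ has vertex set $\{1,\dots,n\}$, an edge $\{i,j\}$ ($i\ne j$) whenever $P_{ij}=1$, and a self-loop $\{i,i\}$ whenever $\Delta_i(P)=2$ (graphs with self-loops are not bipartite). Relabel vertices so that the bipartite components $G_1,\dots,G_r$ come first, each occupying consecutive vertices with one bipartition class (of size $p_i\ge1$) listed first followed by the other (of size $q_i\ge0$), and the remaining $s=n-\sum_{i=1}^r(p_i+q_i)$ vertices lie in non-bipartite components. For $p\ge1,q\ge0$ let $U_{(p,q)}$ be the $(p+q)\times(p+q-1)$ matrix $$U_{(p,q)}=\begin{pmatrix}\mathbf{1}_{p-1}^\top&\mathbf{1}_q^\top\\-I_{p-1}&0\\0&I_q\end{pmatrix},$$ and let $U$ be the $n\times(n-r)$ block-diagonal matrix $U=\operatorname{diag}(U_{(p_1,q_1)},\dots,U_{(p_r,q_r)},I_s)$.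 *)

From HB Require Import structures.
From mathcomp Require Import all_boot all_order all_algebra.
Set Implicit Arguments. Unset Strict Implicit. Unset Printing Implicit Defensive.
Import Order.TTheory GRing.Theory Num.Theory.
Local Open Scope ring_scope.

Section Defs.
Variable R : realFieldType.

Definition Delta n (P : 'M[R]_n) (i : 'I_n) : R :=
  `|P i i| - \sum_(j < n | j != i) `|P i j|.

Definition signless_laplacian n (P : 'M[R]_n) : Prop :=
  [/\ P^T = P,
      (forall i j : 'I_n, i != j -> P i j = 0 \/ P i j = 1),
      (forall i : 'I_n, 0 <= P i i) &
      (forall i : 'I_n, Delta P i = 0 \/ Delta P i = 2)].

Definition gadj n (P : 'M[R]_n) : rel 'I_n := fun i j => (i != j) && (P i j == 1).
Definition gloop n (P : 'M[R]_n) (i : 'I_n) : bool := Delta P i == 2.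

Definition comp_bipartite n (P : 'M[R]_n) (v : 'I_n) : Prop :=
  exists c : 'I_n -> bool, forall x, connect (gadj P) v x ->
    ~~ gloop P x /\ (forall y, gadj P x y -> c x != c y).

Definition off r (p q : 'I_r -> nat) (i : 'I_r) : nat :=
  (\sum_(k < r | (k < i)%N) (p k + q k))%N.
Definition totB r (p q : 'I_r -> nat) : nat := (\sum_(k < r) (p k + q k))%N.
Definition inblock r (p q : 'I_r -> nat) (i : 'I_r) (v : nat) : bool :=
  (off p q i <= v < off p q i + (p i + q i))%N.
Definition inclass1 r (p q : 'I_r -> nat) (i : 'I_r) (v : nat) : bool :=
  (off p q i <= v < off p q i + p i)%N.

Definition coff r (p q : 'I_r -> nat) (i : 'I_r) : nat :=
  (\sum_(k < r | (k < i)%N) (p k + q k - 1))%N.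
Definition totC r (p q : 'I_r -> nat) : nat := (\sum_(k < r) (p k + q k - 1))%N.
Definition incolblock r (p q : 'I_r -> nat) (i : 'I_r) (c : nat) : bool :=
  (coff p q i <= c < coff p q i + (p i + q i - 1))%N.

(* The vertex labelling of the paper: bipartite components G_1..G_r occupy
   consecutive blocks, block i having its first bipartition class (size p i)
   first, then the other one (size q i); the remaining s vertices (the last
   ones) lie in non-bipartite components. *)
Definition bip_labelling n (P : 'M[R]_n) r (p q : 'I_r -> nat) (s : nat) : Prop :=
  [/\ (forall i, 0 < p i)%N,
      n = (totB p q + s)%N,
      (forall i (v w : 'I_n), inblock p q i v ->
          (connect (gadj P) v w <-> inblock p q i w)),
      (forall i (v w : 'I_n), inblock p q i v ->
          ~~ gloop P v /\ (gadj P v w -> inclass1 p q i v != inclass1 p q i w)) &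
      (forall v : 'I_n, (totB p q <= v)%N -> ~ comp_bipartite P v)].

Definition Uloc (p : nat) (a b : nat) : R :=
  if a == 0%N then 1
  else if b == a.-1 then (if (a < p)%N then -1 else 1) else 0.

(* U = diag(U_(p_1,q_1), ..., U_(p_r,q_r), I_s) *)
Definition Umat n r (p q : 'I_r -> nat) : 'M[R]_(n, n - r) :=
  \matrix_(v < n, c < n - r)
    ((\sum_(i < r) (if inblock p q i v && incolblock p q i c
                    then Uloc (p i) (v - off p q i) (c - coff p q i) else 0))
     + (if [&& (totB p q <= v)%N, (totC p q <= c)%N & (v - totB p q == c - totC p q)%N]
        then 1 else 0)).

Definition Smat n (alpha l : R) : 'M[R]_n := alpha%:M + const_mx l.

Definition posdef k (A : 'M[R]_k) : Prop :=
  A^T = A /\ forall x : 'cV[R]_k, x != 0 -> 0 < (x^T *m A *m x) 0 0.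

Definition mx_lim_infty m k (F : R -> 'M[R]_(m, k)) (L : 'M[R]_(m, k)) : Prop :=
  forall eps : R, 0 < eps -> exists T : R, forall t : R, T < t ->
    forall i j, `|F t i j - L i j| < eps.

End Defs.

From HB Require Import structures.
From mathcomp Require Import all_boot all_order all_algebra.
From mathcomp Require Import zify ring lra.
Set Implicit Arguments. Unset Strict Implicit. Unset Printing Implicit Defensive.
Import Order.TTheory GRing.Theory Num.Theory.
Local Open Scope ring_scope.

(* Write M(t) = S + tP.  S is symmetric and coercive (x^T S x >= alpha |x|^2
   with alpha > 0) and P is positive semidefinite, so every M(t), t >= 0, is
   coercive: it is invertible and the entries of M(t)^-1 are at most 1/alpha.
   If ker P = ker U^T and U is injective, then U = P Y and P = E U^T, the Gram
   matrix U^T S^-1 U is positive definite, and with C = (U^T S^-1 U)^-1 U^T S^-1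
   one has the exact identity  t (M(t)^-1 - N) = (I - M(t)^-1 S) Y C,  whose
   right side is bounded; hence M(t)^-1 -> N at rate O(1/t).
   The combinatorial input is ker P = ker U^T: 2 x^T P x is a sum of terms
   Delta_i x_i^2 and P_ij (x_i + x_j)^2, so x lies in ker P iff it vanishes at
   loops and changes sign along edges, i.e. iff it is +-c on the two classes
   of each bipartite component and 0 elsewhere -- which is exactly ker U^T. *)

(* Block k
   occupies [psum L k, psum L k + L k); these blocks are disjoint and cover
   [0, psum_tot L).  Both the vertex blocks (off, totB) and the column blocks
   (coff, totC) of the statement are instances. *)
Section BlockOffsets.
Variables (r : nat) (L : 'I_r -> nat).

Definition psum (m : nat) : nat := (\sum_(k < r | (k < m)%N) L k)%N.
Definition psum_tot : nat := (\sum_(k < r) L k)%N.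

Lemma psumS m (lt_mr : (m < r)%N) : psum m.+1 = (psum m + L (Ordinal lt_mr))%N.
Proof.
rewrite /psum (bigD1 (Ordinal lt_mr)) //= addnC; congr (_ + _)%N.
by apply: eq_bigl => k /=; rewrite ltnS andbC -val_eqE /= -ltn_neqAle.
Qed.

Lemma psum_mono m m' : (m <= m')%N -> (psum m <= psum m')%N.
Proof.
move=> le_mm'; rewrite /psum [X in (_ <= X)%N]big_mkcond [X in (X <= _)%N]big_mkcond /=.
by apply: leq_sum => k _; case: ifP => // lt_km; rewrite (leq_trans lt_km le_mm').
Qed.

Lemma psum_r : psum r = psum_tot.
Proof. by apply: eq_bigl => k; rewrite ltn_ord. Qed.

Lemma psum_ordS (i : 'I_r) : psum i.+1 = (psum i + L i)%N.
Proof. by rewrite (psumS (ltn_ord i)); congr (_ + L _)%N; apply: val_inj. Qed.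

Lemma block_end_le (i j : 'I_r) : (i < j)%N -> (psum i + L i <= psum j)%N.
Proof. by move=> lt_ij; rewrite -psum_ordS psum_mono. Qed.

Lemma block_end_tot (i : 'I_r) : (psum i + L i <= psum_tot)%N.
Proof. by rewrite -psum_ordS -psum_r psum_mono. Qed.

Lemma block_uniq (i j : 'I_r) v :
  (psum i <= v < psum i + L i)%N -> (psum j <= v < psum j + L j)%N -> i = j.
Proof.
move=> /andP[vi1 vi2] /andP[vj1 vj2].
case: (ltngtP i j) => [lt_ij|lt_ji|/val_inj //].
- by have := block_end_le lt_ij; lia.
- by have := block_end_le lt_ji; lia.
Qed.

Lemma block_cover v :
  (v < psum_tot)%N -> exists i : 'I_r, (psum i <= v < psum i + L i)%N.
Proof.
rewrite -psum_r; suff: forall m, (m <= r)%N -> (v < psum m)%N ->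
    exists i : 'I_r, (psum i <= v < psum i + L i)%N by apply.
elim=> [|m IH] le_mr; first by rewrite /psum big_pred0.
rewrite (psumS le_mr) => lt_v; case: (ltnP v (psum m)) => [lt_vm|le_mv].
  exact: IH (ltnW le_mr) lt_vm.
by exists (Ordinal le_mr); rewrite le_mv lt_v.
Qed.

End BlockOffsets.

Lemma psum_tot_pred r (L : 'I_r -> nat) : (forall i, 0 < L i)%N ->
  psum_tot L = (psum_tot (fun k => L k - 1) + r)%N.
Proof.
move=> L_gt0; rewrite /psum_tot -[X in (_ + X)%N]card_ord -sum1_card -big_split /=.
by apply: eq_bigr => i _; rewrite subnK.
Qed.

Section Vectors.
Variable R : realFieldType.

Definition zext m (x : 'I_m -> R) (k : nat) : R :=
  if insub k is Some i then x i else 0.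

Lemma zext_ord m (x : 'I_m -> R) k (lt_km : (k < m)%N) : zext x k = x (Ordinal lt_km).
Proof. by rewrite /zext insubT. Qed.

Lemma zextE m (x : 'I_m -> R) (v : 'I_m) : zext x v = x v.
Proof. by rewrite /zext valK. Qed.

Lemma zext_out m (x : 'I_m -> R) k : (m <= k)%N -> zext x k = 0.
Proof. by move=> le_mk; rewrite /zext insubN // -leqNgt. Qed.

Lemma sum_indicator m (x : 'I_m -> R) k :
  \sum_(v < m) ((v : nat) == k)%:R * x v = zext x k.
Proof.
case: (ltnP k m) => [lt_km|le_mk].
  rewrite (bigD1 (Ordinal lt_km)) //= eqxx mul1r big1 ?addr0; first by rewrite zext_ord.
  move=> v /negbTE ne_v; suff -> : ((v : nat) == k) = false by rewrite mul0r.
  by apply/negbTE; apply: contraFN ne_v => /eqP v_k; apply/eqP/val_inj.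
rewrite zext_out // big1 // => v _.
suff -> : ((v : nat) == k) = false by rewrite mul0r.
by apply/negbTE; have := ltn_ord v; lia.
Qed.

Lemma mulmx_cV_eq0 m k (A : 'M[R]_(m, k)) (v : 'cV[R]_k) :
  A *m v = 0 <-> forall i, \sum_j A i j * v j 0 = 0.
Proof.
split=> [Av0 i | Av0].
  by have := congr1 (fun M : 'cV[R]_m => M i 0) Av0; rewrite !mxE.
by apply/matrixP => i j; rewrite ord1 !mxE Av0.
Qed.

Lemma rV_neq0 m (v : 'rV[R]_m) : v != 0 -> exists k, v 0 k != 0.
Proof.
move=> v_neq0; apply/existsP; apply: contraR v_neq0; rewrite negb_exists => /forallP v0.
by apply/eqP/matrixP => i j; rewrite ord1 mxE; exact/eqP/negPn/v0.
Qed.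

Lemma cV_neq0 m (v : 'cV[R]_m) : v != 0 -> exists k, v k 0 != 0.
Proof.
move=> v_neq0; apply/existsP; apply: contraR v_neq0; rewrite negb_exists => /forallP v0.
by apply/eqP/matrixP => i j; rewrite ord1 mxE; exact/eqP/negPn/v0.
Qed.

Lemma ker_sub m1 m2 k (A : 'M[R]_(m1, k)) (B : 'M[R]_(m2, k)) :
  (forall v : 'cV[R]_k, B *m v = 0 -> A *m v = 0) -> (A <= B)%MS.
Proof.
move=> kerBA; rewrite submxE; apply/eqP/matrixP => i j.
have := kerBA (col j (cokermx B)); rewrite colE mulmxA mulmx_coker mul0mx.
move=> /(_ erefl)/(congr1 (fun M : 'cV[R]_m1 => M i 0)).
by rewrite mulmxA -colE !mxE.
Qed.

Definition mx_abs_sum m k (A : 'M[R]_(m, k)) : R := \sum_i \sum_j `|A i j|.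

Lemma entry_le_abs_sum m k (A : 'M[R]_(m, k)) i j : `|A i j| <= mx_abs_sum A.
Proof.
rewrite /mx_abs_sum (bigD1 i) //= (bigD1 j) //= -addrA lerDl.
by rewrite addr_ge0 ?sumr_ge0 // => i' _; apply: sumr_ge0.
Qed.

Lemma mulmx_entry_le m k l (A : 'M[R]_(m, k)) (B : 'M[R]_(k, l)) c i j :
  0 <= c -> (forall i k, `|A i k| <= c) -> `|(A *m B) i j| <= c * mx_abs_sum B.
Proof.
move=> c_ge0 A_le; rewrite mxE; apply: (le_trans (ler_norm_sum _ _ _)).
apply: (@le_trans _ _ (\sum_k0 c * `|B k0 j|)).
  by apply: ler_sum => k0 _; rewrite normrM ler_wpM2r.
rewrite -mulr_sumr ler_wpM2l //; apply: ler_sum => k0 _.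
by rewrite (bigD1 j) //= lerDl sumr_ge0.
Qed.

End Vectors.

Section QuadraticForms.
Variable R : realFieldType.

Definition qf m (A : 'M[R]_m) (x : 'I_m -> R) : R :=
  \sum_i \sum_j x i * A i j * x j.

Definition coercive m (alpha : R) (A : 'M[R]_m) : Prop :=
  forall x : 'I_m -> R, alpha * \sum_i x i ^+ 2 <= qf A x.

Lemma qf_row m (A : 'M[R]_m) (v : 'rV[R]_m) :
  (v *m A *m v^T) 0 0 = qf A (fun i => v 0 i).
Proof.
rewrite mxE /qf exchange_big /=; apply: eq_bigr => j _.
by rewrite !mxE mulr_suml; apply: eq_bigr => i _.
Qed.

Lemma qf_col m (A : 'M[R]_m) (v : 'cV[R]_m) :
  (v^T *m A *m v) 0 0 = qf A (fun i => v i 0).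
Proof.
rewrite -{2}(trmxK v) qf_row /qf.
by apply: eq_bigr => i _; apply: eq_bigr => j _; rewrite !mxE.
Qed.

Lemma qfD m (A B : 'M[R]_m) x : qf (A + B) x = qf A x + qf B x.
Proof.
rewrite /qf -big_split; apply: eq_bigr => i _; rewrite -big_split.
by apply: eq_bigr => j _; rewrite mxE /= mulrDr mulrDl.
Qed.

Lemma qfZ m (a : R) (A : 'M[R]_m) x : qf (a *: A) x = a * qf A x.
Proof.
rewrite /qf mulr_sumr; apply: eq_bigr => i _; rewrite mulr_sumr.
by apply: eq_bigr => j _; rewrite mxE; ring.
Qed.

Lemma qf_scalar m (a : R) x : qf (a%:M : 'M[R]_m) x = a * \sum_i x i ^+ 2.
Proof.
rewrite /qf mulr_sumr; apply: eq_bigr => i _.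
rewrite (bigD1 i) //= big1 ?addr0; first by rewrite mxE eqxx mulr1n; ring.
by move=> j ne_ji; rewrite mxE eq_sym (negbTE ne_ji) mulr0n mulr0 mul0r.
Qed.

Lemma qf_const m (a : R) x : qf (const_mx a : 'M[R]_m) x = a * (\sum_i x i) ^+ 2.
Proof.
rewrite /qf expr2 big_distrlr /= mulr_sumr; apply: eq_bigr => i _.
by rewrite mulr_sumr; apply: eq_bigr => j _; rewrite mxE; ring.
Qed.

Lemma qf_ker m (A : 'M[R]_m) x : (forall i, \sum_j A i j * x j = 0) -> qf A x = 0.
Proof.
move=> Ax0; rewrite /qf big1 // => i _.
transitivity (x i * \sum_j A i j * x j); last by rewrite Ax0 mulr0.
by rewrite mulr_sumr; apply: eq_bigr => j _; ring.
Qed.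

Lemma sumsq_gt0 m (x : 'I_m -> R) k : x k != 0 -> 0 < \sum_i x i ^+ 2.
Proof.
move=> xk_neq0; rewrite (bigD1 k) //=.
apply: (@lt_le_trans _ _ (x k ^+ 2)); first by rewrite lt0r sqrf_eq0 xk_neq0 sqr_ge0.
by rewrite lerDl sumr_ge0 // => i _; apply: sqr_ge0.
Qed.

Lemma coercive_add_psd m alpha (S P : 'M[R]_m) t :
  coercive alpha S -> (forall x, 0 <= qf P x) -> 0 <= t -> coercive alpha (S + t *: P).
Proof.
move=> S_coer P_psd t_ge0 x; rewrite qfD qfZ.
by have := S_coer x; have := mulr_ge0 t_ge0 (P_psd x); lra.
Qed.

Section Coercive.
Variables (m : nat) (alpha : R) (A : 'M[R]_m).
Hypotheses (alpha_gt0 : 0 < alpha) (A_coer : coercive alpha A).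

(* A coercive matrix has no nonzero (left) null vector. *)
Lemma coercive_unit : A \in unitmx.
Proof.
rewrite unitmxE unitfE; apply/negP => /det0P [v v_neq0 vA0].
have [k vk_neq0] := rV_neq0 v_neq0.
have := A_coer (fun i => v 0 i); rewrite -qf_row vA0 mul0mx mxE.
by have := mulr_gt0 alpha_gt0 (sumsq_gt0 vk_neq0); lra.
Qed.

(* If alpha |x|^2 <= x_k and x_k^2, x_j^2 <= |x|^2 then |x_j| <= 1/alpha:
   x_k^2 <= x_k / alpha gives alpha x_k <= 1, hence
   alpha^2 x_j^2 <= alpha^2 |x|^2 <= alpha x_k <= 1. *)
Lemma coercive_row_bound (n2 xk xj : R) :
  alpha * n2 <= xk -> xk ^+ 2 <= n2 -> xj ^+ 2 <= n2 -> `|xj| <= alpha^-1.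
Proof.
move=> le_xk xk2_le xj2_le.
have n2_ge0 : 0 <= n2 by apply: le_trans xk2_le; apply: sqr_ge0.
have xk_ge0 : 0 <= xk by have := mulr_ge0 (ltW alpha_gt0) n2_ge0; lra.
have axk_le1 : alpha * xk <= 1.
  have : alpha * xk ^+ 2 <= xk by have := ler_wpM2l (ltW alpha_gt0) xk2_le; lra.
  case: (ltrgtP xk 0) => [|xk_gt0|->]; [lra | | lra].
  by move=> le_xk2; rewrite -(ler_pM2r xk_gt0) -mulrA -expr2 mul1r.
have axj2_le1 : (alpha * `|xj|) ^+ 2 <= 1 ^+ 2.
  rewrite exprMn real_normK ?num_real // expr1n.
  have a2_ge0 : 0 <= alpha ^+ 2 by apply: sqr_ge0.
  have := ler_wpM2l a2_ge0 xj2_le; have := ler_wpM2l (ltW alpha_gt0) le_xk.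
  by rewrite expr2 mulrA; lra.
rewrite -(ler_pM2l alpha_gt0) mulfV ?gt_eqF //.
by move: axj2_le1; rewrite ler_sqr // nnegrE ?mulr_ge0 // ltW.
Qed.

(* The entries of the inverse of a coercive matrix are bounded by 1/alpha:
   apply coercivity to the k-th row x of A^-1, for which x^T A x = x_k. *)
Lemma coercive_inv_entry k j : `|invmx A k j| <= alpha^-1.
Proof.
set x := row k (invmx A).
have xA : x *m A = delta_mx 0 k by rewrite /x -row_mul mulVmx ?coercive_unit // rowE mulmx1.
have qfx : qf A (fun i => x 0 i) = x 0 k by rewrite -qf_row xA -rowE !mxE.
have le_sum i : x 0 i ^+ 2 <= \sum_i0 x 0 i0 ^+ 2.
  by rewrite (bigD1 i) //= lerDl sumr_ge0 // => i0 _; apply: sqr_ge0.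
have := A_coer (fun i => x 0 i); rewrite qfx => le_xk.
by have := coercive_row_bound le_xk (le_sum k) (le_sum j); rewrite /x mxE.
Qed.

Lemma coercive_inv_pos (z : 'cV[R]_m) :
  A^T = A -> z != 0 -> 0 < (z^T *m invmx A *m z) 0 0.
Proof.
move=> A_sym z_neq0; set w := invmx A *m z.
have z_Aw : z = A *m w by rewrite /w mulKVmx // coercive_unit.
have w_neq0 : w != 0 by apply: contra_neq z_neq0 => w0; rewrite z_Aw w0 mulmx0.
rewrite -mulmxA -/w {1}z_Aw trmx_mul A_sym qf_col.
have [k wk_neq0] := cV_neq0 w_neq0.
have := A_coer (fun i => w i 0).
by have := mulr_gt0 alpha_gt0 (sumsq_gt0 (x := fun i => w i 0) wk_neq0); lra.
Qed.

End Coercive.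
End QuadraticForms.

Lemma mx_lim_of_rate (R : realFieldType) m k (F : R -> 'M[R]_(m, k)) (L : 'M[R]_(m, k)) K :
  (forall t, 0 < t -> forall i j, t * `|F t i j - L i j| <= K) -> mx_lim_infty F L.
Proof.
move=> rate eps eps_gt0; exists (`|K| / eps) => t lt_t i j.
have t_gt0 : 0 < t by apply: le_lt_trans lt_t; rewrite divr_ge0 // ltW.
have K_lt : `|K| < t * eps by rewrite -ltr_pdivrMr.
rewrite -(ltr_pM2l t_gt0); have := rate t t_gt0 i j; have := ler_norm K; lra.
Qed.

Section ResolventLimit.
Variable R : realFieldType.
Variables (n m : nat) (alpha : R) (S P : 'M[R]_n) (U : 'M[R]_(n, m)).
Hypotheses (alpha_gt0 : 0 < alpha) (S_coer : coercive alpha S) (S_sym : S^T = S).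
Hypotheses (P_psd : forall x, 0 <= qf P x) (P_sym : P^T = P).
Hypothesis kerP_kerUT : forall v : 'cV[R]_n, P *m v = 0 <-> U^T *m v = 0.
Hypothesis U_inj : forall y : 'cV[R]_m, U *m y = 0 -> y = 0.

Lemma resolvent_coercive t : 0 <= t -> coercive alpha (S + t *: P).
Proof. exact: coercive_add_psd. Qed.

Lemma resolvent_unit t : 0 <= t -> S + t *: P \in unitmx.
Proof. by move=> t_ge0; apply: coercive_unit alpha_gt0 (resolvent_coercive t_ge0). Qed.

Lemma S_unit : S \in unitmx.
Proof. exact: coercive_unit alpha_gt0 S_coer. Qed.

(* Equal kernels mean equal column spaces: U = P Y and P = E U^T. *)
Lemma U_factor : exists Y : 'M[R]_(n, m), U = P *m Y.
Proof.
have /submxP [D UT_DP] : (U^T <= P)%MS by apply: ker_sub => v /kerP_kerUT.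
by exists D^T; rewrite -(trmxK U) UT_DP trmx_mul P_sym.
Qed.

Lemma P_factor : exists E : 'M[R]_(n, m), P = E *m U^T.
Proof.
have /submxP [E P_EUT] : (P <= U^T)%MS by apply: ker_sub => v /kerP_kerUT.
by exists E.
Qed.

Definition gram : 'M[R]_m := U^T *m invmx S *m U.

Lemma gram_posdef : posdef gram.
Proof.
split; first by rewrite /gram !trmx_mul trmxK trmx_inv S_sym mulmxA.
move=> x x_neq0; have Ux_neq0 : U *m x != 0 by apply: contra x_neq0 => /eqP/U_inj ->.
by have := coercive_inv_pos alpha_gt0 S_coer S_sym Ux_neq0; rewrite trmx_mul !mulmxA.
Qed.

Lemma gram_unit : gram \in unitmx.
Proof.
rewrite unitmxE unitfE; apply/negP => /det0P [v v_neq0 vG0].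
have vT_neq0 : v^T != 0 by apply: contra_neq v_neq0 => /(congr1 trmx); rewrite trmxK trmx0.
by have := gram_posdef.2 _ vT_neq0; rewrite trmxK vG0 mul0mx mxE ltxx.
Qed.

Definition Nlim : 'M[R]_n :=
  invmx S - invmx S *m U *m invmx gram *m U^T *m invmx S.

(* The coefficient matrix C = gram^-1 U^T S^-1; then N = S^-1 - S^-1 U C. *)
Definition coef : 'M[R]_(m, n) := invmx gram *m U^T *m invmx S.

(* The exact error formula t (M(t)^-1 - N) = (1 - M(t)^-1 S) Y C.  It uses
   U^T N = 0, hence P N = 0 and M(t) N = S N, together with 1 - S N = U C,
   U = P Y and t M(t)^-1 P = 1 - M(t)^-1 S. *)
Lemma resolvent_error (Y : 'M[R]_(n, m)) t : U = P *m Y -> 0 < t ->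
  t *: (invmx (S + t *: P) - Nlim) = Y *m coef - invmx (S + t *: P) *m (S *m Y *m coef).
Proof.
move=> U_PY t_gt0; set M := S + t *: P; have M_unit := resolvent_unit (ltW t_gt0).
have [E P_EUT] := P_factor.
have N_coef : Nlim = invmx S - invmx S *m U *m coef by rewrite /Nlim /coef !mulmxA.
have UT_N : U^T *m Nlim = 0.
  by rewrite N_coef mulmxBr !mulmxA mulmxV ?gram_unit // mul1mx subrr.
have M_N : M *m Nlim = S *m Nlim.
  by rewrite /M mulmxDl -scalemxAl P_EUT -mulmxA UT_N mulmx0 scaler0 addr0.
have SN : 1%:M - S *m Nlim = U *m coef.
  rewrite N_coef mulmxBr mulmxV ?S_unit // !mulmxA mulmxV ?S_unit // mul1mx.
  by rewrite opprB addrC subrK.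
have MP : (t *: invmx M) *m P = 1%:M - invmx M *m S.
  rewrite -scalemxAl scalemxAr (_ : t *: P = M - S); last by rewrite /M addrC addKr.
  by rewrite mulmxBr mulVmx.
have -> : invmx M - Nlim = invmx M *m (1%:M - S *m Nlim).
  by rewrite mulmxBr mulmx1 -M_N mulmxA mulVmx // mul1mx.
by rewrite SN U_PY !mulmxA !scalemxAl MP !mulmxBl mul1mx.
Qed.

Theorem resolvent_lim : mx_lim_infty (fun t => invmx (S + t *: P)) Nlim.
Proof.
have [Y U_PY] := U_factor; set W := S *m Y *m coef.
apply: (@mx_lim_of_rate _ _ _ _ _ (mx_abs_sum (Y *m coef) + alpha^-1 * mx_abs_sum W)).
move=> t t_gt0 i j; set M := S + t *: P.
have -> : t * `|invmx M i j - Nlim i j| = `|(Y *m coef) i j - (invmx M *m W) i j|.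
  rewrite -[t in LHS]ger0_norm ?ltW // -normrM; congr `|_|.
  have := congr1 (fun A : 'M[R]_n => A i j) (resolvent_error U_PY t_gt0).
  by rewrite !mxE => ->.
apply: (le_trans (ler_normB _ _)); apply: lerD; first exact: entry_le_abs_sum.
apply: mulmx_entry_le; first by rewrite invr_ge0 ltW.
by move=> k l; apply: coercive_inv_entry alpha_gt0 (resolvent_coercive (ltW t_gt0)) k l.
Qed.

End ResolventLimit.

Lemma connect_inv (T : finType) (e : rel T) (I : T -> Prop) x y :
  I x -> (forall a b, I a -> e a b -> I b) -> connect e x y -> I y.
Proof.
move=> Ix e_inv /connectP [pth e_pth ->]; elim: pth x Ix e_pth => [|z pth IH] x Ix //=.
by move=> /andP [e_xz e_pth]; apply: IH (e_inv _ _ Ix e_xz) e_pth.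
Qed.

(* The quadratic form of a signless Laplacian:
     x^T P x = sum_i Delta_i x_i^2 + sum_{edges ij} (x_i + x_j)^2,
   written here as 2 x^T P x = sum_i 2 Delta_i x_i^2 + sum_{i <> j} P_ij (x_i + x_j)^2.
   Hence P is positive semidefinite, and x^T P x = 0 forces x to vanish at
   self-loops and to change sign along every edge. *)
Section SignlessLaplacian.
Variable R : realFieldType.
Variables (n : nat) (P : 'M[R]_n).
Hypotheses (P_sym : P^T = P) (P_off : forall i j : 'I_n, i != j -> P i j = 0 \/ P i j = 1).
Hypotheses (P_diag : forall i, 0 <= P i i) (P_Delta : forall i, Delta P i = 0 \/ Delta P i = 2).

Lemma P_symE i j : P i j = P j i.
Proof. by rewrite -[in LHS]P_sym mxE. Qed.

Lemma P_ge0 i j : 0 <= P i j.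
Proof.
case: (eqVneq i j) => [->|ne_ij]; first exact: P_diag.
by case: (P_off ne_ij) => ->; rewrite ?ler01.
Qed.

Lemma Delta_ge0 i : 0 <= Delta P i.
Proof. by case: (P_Delta i) => ->. Qed.

Lemma P_diagE u : P u u = Delta P u + \sum_(j | j != u) P u j.
Proof.
rewrite /Delta ger0_norm // (eq_bigr (fun j => P u j)) ?subrK // => j _.
by rewrite ger0_norm // P_ge0.
Qed.

Lemma gadj_sym u w : gadj P u w -> gadj P w u.
Proof. by rewrite /gadj eq_sym P_symE. Qed.

(* Row i of 2 x^T P x, up to the terms P_ij (x_i^2 - x_j^2), which cancel
   in the total by symmetry of P. *)
Lemma qf_signless_row (x : 'I_n -> R) i :
  2 * (\sum_j x i * P i j * x j) =
  2 * Delta P i * x i ^+ 2 + \sum_(j | j != i) P i j * (x i + x j) ^+ 2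
  + (\sum_(j | j != i) P i j * x i ^+ 2 - \sum_(j | j != i) P i j * x j ^+ 2).
Proof.
rewrite (bigD1 i) //= P_diagE.
set A := \sum_(j | j != i) P i j.
set B := \sum_(j | j != i) x i * P i j * x j.
set C := \sum_(j | j != i) P i j * x j ^+ 2.
have -> : \sum_(j | j != i) P i j * (x i + x j) ^+ 2 = A * x i ^+ 2 + 2 * B + C.
  rewrite /A /B /C mulr_suml mulr_sumr -!big_split /=.
  by apply: eq_bigr => j _; ring.
rewrite -mulr_suml -/A; ring.
Qed.

Lemma qf_signless (x : 'I_n -> R) :
  2 * qf P x = \sum_i 2 * Delta P i * x i ^+ 2
             + \sum_i \sum_(j | j != i) P i j * (x i + x j) ^+ 2.
Proof.
have swap : \sum_i \sum_(j | j != i) P i j * x j ^+ 2 =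
            \sum_i \sum_(j | j != i) P i j * x i ^+ 2.
  rewrite (exchange_big_dep xpredT) //=; apply: eq_bigr => j _.
  by apply: eq_big => [i|i _]; rewrite 1?eq_sym // P_symE.
rewrite /qf mulr_sumr (eq_bigr _ (fun i _ => qf_signless_row x i)).
by rewrite big_split /= big_split /= sumrB swap subrr addr0.
Qed.

Lemma loop_term_ge0 (x : 'I_n -> R) i : 0 <= 2 * Delta P i * x i ^+ 2.
Proof. by rewrite mulr_ge0 ?sqr_ge0 // mulr_ge0 ?Delta_ge0. Qed.

Lemma edge_term_ge0 (x : 'I_n -> R) i j : 0 <= P i j * (x i + x j) ^+ 2.
Proof. by rewrite mulr_ge0 ?P_ge0 ?sqr_ge0. Qed.

Lemma loop_sum_ge0 (x : 'I_n -> R) : 0 <= \sum_i 2 * Delta P i * x i ^+ 2.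
Proof. by apply: sumr_ge0 => i _; apply: loop_term_ge0. Qed.

Lemma edge_sum_ge0 (x : 'I_n -> R) :
  0 <= \sum_i \sum_(j | j != i) P i j * (x i + x j) ^+ 2.
Proof. by apply: sumr_ge0 => i _; apply: sumr_ge0 => j _; apply: edge_term_ge0. Qed.

Lemma qf_signless_ge0 (x : 'I_n -> R) : 0 <= qf P x.
Proof. by have := qf_signless x; have := loop_sum_ge0 x; have := edge_sum_ge0 x; lra. Qed.

Lemma kerP_loop_edge (x : 'I_n -> R) : (forall u, \sum_w P u w * x w = 0) ->
  (forall u, gloop P u -> x u = 0) /\ (forall u w, gadj P u w -> x u + x w = 0).
Proof.
move=> /qf_ker qf0; have := qf_signless x; rewrite qf0 mulr0 => sum0.
have loops_ge0 := loop_sum_ge0 x; have edges_ge0 := edge_sum_ge0 x.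
have loops0 : \sum_i 2 * Delta P i * x i ^+ 2 = 0 by lra.
have edges0 : \sum_i \sum_(j | j != i) P i j * (x i + x j) ^+ 2 = 0 by lra.
split=> [u /eqP Du | u w /andP [ne_uw /eqP Puw]].
  have := psumr_eq0P (fun i _ => loop_term_ge0 x i) loops0 (i := u) isT.
  by rewrite Du => /eqP; rewrite mulf_eq0 sqrf_eq0 mulf_eq0 pnatr_eq0 => /or3P[|/eqP|/eqP].
have edges_u0 := psumr_eq0P (fun i _ => sumr_ge0 _ (fun j _ => edge_term_ge0 x i j))
  edges0 (i := u) isT.
have ne_wu : w != u by rewrite eq_sym.
have := psumr_eq0P (fun j _ => edge_term_ge0 x u j) edges_u0 ne_wu.
by rewrite Puw mul1r => /eqP; rewrite sqrf_eq0 => /eqP.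
Qed.

End SignlessLaplacian.

Section BipartiteKernel.
Variable R : realFieldType.
Variables (n : nat) (P : 'M[R]_n) (r : nat) (p q : 'I_r -> nat) (s : nat).
Hypotheses (P_sym : P^T = P) (P_off : forall i j : 'I_n, i != j -> P i j = 0 \/ P i j = 1).
Hypotheses (P_diag : forall i, 0 <= P i i) (P_Delta : forall i, Delta P i = 0 \/ Delta P i = 2).
Hypotheses (p_gt0 : forall i, (0 < p i)%N) (n_eq : n = (totB p q + s)%N).
Hypothesis block_conn : forall i (v w : 'I_n), inblock p q i v ->
  (connect (gadj P) v w <-> inblock p q i w).
Hypothesis block_classes : forall i (v w : 'I_n), inblock p q i v ->
  ~~ gloop P v /\ (gadj P v w -> inclass1 p q i v != inclass1 p q i w).
Hypothesis tail_nonbip : forall v : 'I_n, (totB p q <= v)%N -> ~ comp_bipartite P v.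

Lemma ncols_eq : (n - r = totC p q + s)%N.
Proof.
have lens_gt0 i : (0 < p i + q i)%N by rewrite addn_gt0 p_gt0.
have totB_eq : totB p q = (totC p q + r)%N := psum_tot_pred lens_gt0.
by rewrite n_eq totB_eq; lia.
Qed.

Lemma vblock_end i : (off p q i + (p i + q i) <= totB p q)%N.
Proof. exact: (block_end_tot (fun k => p k + q k)%N i). Qed.

Lemma cblock_end i : (coff p q i + (p i + q i - 1) <= totC p q)%N.
Proof. exact: (block_end_tot (fun k => p k + q k - 1)%N i). Qed.

Lemma vblock_lt i (v : nat) : inblock p q i v -> (v < totB p q)%N.
Proof. by have := vblock_end i; rewrite /inblock; lia. Qed.

Lemma vblock_uniq i j (v : nat) : inblock p q i v -> inblock p q j v -> i = j.
Proof. exact: (block_uniq (L := fun k => p k + q k)%N). Qed.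

Lemma cblock_uniq i j (c : nat) : incolblock p q i c -> incolblock p q j c -> i = j.
Proof. exact: (block_uniq (L := fun k => p k + q k - 1)%N). Qed.

Lemma vblock_cover v : (v < totB p q)%N -> exists i, inblock p q i v.
Proof. exact: (block_cover (L := fun k => p k + q k)%N). Qed.

Lemma cblock_cover c : (c < totC p q)%N -> exists i, incolblock p q i c.
Proof. exact: (block_cover (L := fun k => p k + q k - 1)%N). Qed.

Definition signed_block_vector (x : 'I_n -> R) : Prop :=
  (forall i a, (a < p i + q i)%N -> zext x (off p q i + a) =
     if (a < p i)%N then zext x (off p q i) else - zext x (off p q i))
  /\ (forall v : 'I_n, (totB p q <= v)%N -> x v = 0).

(* Odd along edges: connectivity propagates the sign pattern from the first
   vertex of a block through the whole (bipartite) block. *)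
Lemma edge_signs_block (x : 'I_n -> R) : (forall u w, gadj P u w -> x u + x w = 0) ->
  forall i a, (a < p i + q i)%N -> zext x (off p q i + a) =
     if (a < p i)%N then zext x (off p q i) else - zext x (off p q i).
Proof.
move=> x_edge i a lt_a; have := vblock_end i; have := p_gt0 i => pi_gt0 end_i.
have lt0 : (off p q i < n)%N by rewrite n_eq; lia.
have lta : (off p q i + a < n)%N by rewrite n_eq; lia.
rewrite (zext_ord x lt0) (zext_ord x lta); set v0 := Ordinal lt0; set w := Ordinal lta.
have v0_in : inblock p q i v0 by rewrite /inblock /=; lia.
have w_in : inblock p q i w by rewrite /inblock /=; lia.
have v0_cls : inclass1 p q i v0 by rewrite /inclass1 /=; lia.
have -> : (a < p i)%N = inclass1 p q i w by apply/idP/idP; rewrite /inclass1 /=; lia.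
pose I (y : 'I_n) := inblock p q i y /\ x y = if inclass1 p q i y then x v0 else - x v0.
suff [] : I w by [].
apply: connect_inv (_ : I v0) _ ((block_conn w v0_in).2 w_in); first by rewrite /I v0_cls.
move=> y z [y_in x_y] yz; have z_in := (block_conn z y_in).1 (connect1 yz).
split=> //; have := (block_classes z y_in).2 yz; have := x_edge y z yz.
rewrite x_y => xz_eq; have -> : x z = - (if inclass1 p q i y then x v0 else - x v0) by lra.
by case: (inclass1 p q i y); case: (inclass1 p q i z) => //= _; rewrite opprK.
Qed.

(* Vanishing on loops and odd along edges: a nonzero value anywhere in a
   component would 2-colour it by sign, making it bipartite. *)
Lemma edge_signs_tail (x : 'I_n -> R) : (forall u, gloop P u -> x u = 0) ->
  (forall u w, gadj P u w -> x u + x w = 0) ->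
  forall v : 'I_n, (totB p q <= v)%N -> x v = 0.
Proof.
move=> x_loop x_edge v le_v; apply/eqP; apply: contraT => xv_neq0.
case: (tail_nonbip le_v); exists (fun y => 0 < x y) => y vy.
have x_y : x y = x v \/ x y = - x v.
  apply: (connect_inv (I := fun y => x y = x v \/ x y = - x v) _ _ vy); first by left.
  by move=> a b Ia ab; have := x_edge a b ab; case: Ia => Ea; [right|left]; lra.
have xy_neq0 : x y != 0 by case: x_y => ->; rewrite ?oppr_eq0.
split; first by apply: contra xy_neq0 => /x_loop ->.
move=> z yz; have := x_edge y z yz => xz_eq; have -> : x z = - x y by lra.
by rewrite oppr_gt0; case: (ltrgtP (x y) 0) => // xy0; rewrite xy0 eqxx in xy_neq0.
Qed.

Lemma signed_block_value (x : 'I_n -> R) i (y : 'I_n) :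
  signed_block_vector x -> inblock p q i y ->
  x y = if inclass1 p q i y then zext x (off p q i) else - zext x (off p q i).
Proof.
move=> [x_blk _] y_in; have /andP [le_y lt_y] := y_in.
have := x_blk i (y - off p q i)%N; rewrite subnKC // zextE => -> ; last by lia.
by congr (if _ then _ else _); apply/idP/idP; rewrite /inclass1; lia.
Qed.

(* Signed block vectors lie in the kernel of P: on a block there are no
   loops, so P_uu is the degree and every neighbour carries the opposite sign;
   on the tail, x vanishes at u and at all its neighbours. *)
Lemma signed_block_kerP (x : 'I_n -> R) : signed_block_vector x ->
  forall u, \sum_w P u w * x w = 0.
Proof.
move=> x_sb u; have [_ x_tail] := x_sb; rewrite (bigD1 u) //=.
have P_u w : w != u -> P u w = 0 \/ gadj P u w.
  rewrite eq_sym => ne_uw; rewrite /gadj ne_uw.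
  by case: (P_off ne_uw) => ->; [left | right; rewrite eqxx].
case: (ltnP u (totB p q)) => [lt_u|le_u].
  have [i u_in] := vblock_cover lt_u.
  have D0 : Delta P u = 0.
    by case: (P_Delta u) => // D2; case/negP: (block_classes u u_in).1; rewrite /gloop D2.
  rewrite (P_diagE P_off P_diag) D0 add0r mulr_suml -big_split big1 //= => w ne_wu.
  case: (P_u w ne_wu) => [->|uw]; first by rewrite !mul0r addr0.
  have w_in := (block_conn w u_in).1 (connect1 uw).
  have := (block_classes w u_in).2 uw; move: uw => /andP [_ /eqP ->].
  rewrite (signed_block_value x_sb u_in) (signed_block_value x_sb w_in).
  by case: (inclass1 p q i u); case: (inclass1 p q i w) => //= _; ring.
rewrite (x_tail u le_u) mulr0 add0r big1 // => w ne_wu.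
case: (P_u w ne_wu) => [->|uw]; first by rewrite mul0r.
rewrite x_tail ?mulr0 //; case: (ltnP w (totB p q)) => // lt_w.
have [j w_in] := vblock_cover lt_w.
have := vblock_lt ((block_conn u w_in).1 (connect1 (gadj_sym P_sym uw))); lia.
Qed.

Local Notation U := (@Umat R n r p q).

Lemma U_col_block i (c : 'I_(n - r)) (v : 'I_n) : incolblock p q i c ->
  U v c = ((v : nat) == off p q i)%N%:R +
    (if ((c - coff p q i).+1 < p i)%N then -1 else 1) *
    ((v : nat) == off p q i + (c - coff p q i).+1)%N%:R.
Proof.
move=> c_in; have := cblock_end i; have := p_gt0 i => pi_gt0 end_i.
rewrite mxE (bigD1 i) //= c_in andbT big1 => [|j ne_ji]; last first.
  rewrite (_ : incolblock p q j c = false) ?andbF //.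
  by apply/negbTE; apply: contra ne_ji => c_inj; apply/eqP; apply: cblock_uniq c_inj c_in.
have -> : [&& (totB p q <= v)%N, (totC p q <= c)%N & (v - totB p q == c - totC p q)%N] = false.
  by apply/negbTE; move: c_in; rewrite /incolblock; lia.
move: c_in; rewrite /incolblock /Uloc => c_in.
case v_in: (inblock p q i v); move: v_in; rewrite /inblock => v_in.
  case: (eqVneq (v : nat) (off p q i)) => [->|ne_v0].
    rewrite subnn eqxx (_ : (_ == _ + _)%N = false) /=; last by apply/negbTE; lia.
    by rewrite mulr0 addr0.
  rewrite (_ : (v - off p q i == 0)%N = false) /=; last by apply/negbTE; lia.
  case: (eqVneq (c - coff p q i)%N (v - off p q i).-1) => [cv|ncv].
    rewrite (_ : (v : nat) == _ = true); last by apply/eqP; lia.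
    by rewrite (_ : ((c - coff p q i).+1 = v - off p q i)%N) /=; [ring | lia].
  by rewrite (_ : (v : nat) == _ = false) /=; [ring | apply/negbTE; lia].
rewrite (_ : (v : nat) == off p q i = false); last by apply/negbTE; lia.
by rewrite (_ : (v : nat) == _ = false) /=; [ring | apply/negbTE; lia].
Qed.

Lemma U_col_tail (c : 'I_(n - r)) (v : 'I_n) : (totC p q <= c)%N ->
  U v c = ((v : nat) == totB p q + (c - totC p q))%N%:R.
Proof.
move=> le_c; rewrite mxE big1 => [|j _]; last first.
  have end_j := cblock_end j.
  by rewrite (_ : incolblock p q j c = false) ?andbF //; apply/negbTE; rewrite /incolblock; lia.
have -> : [&& (totB p q <= v)%N, (totC p q <= c)%N & (v - totB p q == c - totC p q)%N]
    = ((v : nat) == totB p q + (c - totC p q))%N by apply/idP/idP; lia.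
by rewrite add0r; case: (_ == _).
Qed.

Lemma U_row_block i (v : 'I_n) (c : 'I_(n - r)) : inblock p q i v -> (0 < v - off p q i)%N ->
  U v c = (if (v - off p q i < p i)%N then -1 else 1) *
          ((c : nat) == coff p q i + (v - off p q i).-1)%N%:R.
Proof.
move=> v_in v_pos; have := cblock_end i; have := p_gt0 i; have := vblock_lt v_in.
move=> lt_v pi_gt0 end_i.
rewrite mxE (bigD1 i) //= v_in /= big1 => [|j ne_ji]; last first.
  rewrite (_ : inblock p q j v = false) //.
  by apply/negbTE; apply: contra ne_ji => v_inj; apply/eqP; apply: vblock_uniq v_inj v_in.
have -> : [&& (totB p q <= v)%N, (totC p q <= c)%N & (v - totB p q == c - totC p q)%N] = false.
  by apply/negbTE; lia.
rewrite /Uloc (_ : (v - off p q i == 0)%N = false); last by apply/negbTE; lia.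
move: v_in; rewrite /inblock => v_in.
case c_in: (incolblock p q i c); move: c_in; rewrite /incolblock => c_in.
  case: (eqVneq (c - coff p q i)%N (v - off p q i).-1) => [cv|ncv].
    by rewrite (_ : (c : nat) == _ = true) /=; [ring | apply/eqP; lia].
  by rewrite (_ : (c : nat) == _ = false) /=; [ring | apply/negbTE; lia].
by rewrite (_ : (c : nat) == _ = false) /=; [ring | apply/negbTE; lia].
Qed.

Lemma U_row_tail (v : 'I_n) (c : 'I_(n - r)) : (totB p q <= v)%N ->
  U v c = ((c : nat) == totC p q + (v - totB p q))%N%:R.
Proof.
move=> le_v; rewrite mxE big1 => [|j _]; last first.
  have end_j := vblock_end j.
  by rewrite (_ : inblock p q j v = false) //; apply/negbTE; rewrite /inblock; lia.
have -> : [&& (totB p q <= v)%N, (totC p q <= c)%N & (v - totB p q == c - totC p q)%N]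
    = ((c : nat) == totC p q + (v - totB p q))%N by apply/idP/idP; lia.
by rewrite add0r; case: (_ == _).
Qed.

Lemma UT_apply_block i (c : 'I_(n - r)) (x : 'I_n -> R) : incolblock p q i c ->
  \sum_v U v c * x v = zext x (off p q i) +
    (if ((c - coff p q i).+1 < p i)%N then -1 else 1) * zext x (off p q i + (c - coff p q i).+1).
Proof.
move=> c_in; rewrite -!sum_indicator mulr_sumr -big_split /=.
by apply: eq_bigr => v _; rewrite (U_col_block v c_in) mulrDl mulrA.
Qed.

Lemma UT_apply_tail (c : 'I_(n - r)) (x : 'I_n -> R) : (totC p q <= c)%N ->
  \sum_v U v c * x v = zext x (totB p q + (c - totC p q)).
Proof. by move=> le_c; rewrite -sum_indicator; apply: eq_bigr => v _; rewrite U_col_tail. Qed.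

Lemma U_apply_block i (v : 'I_n) (y : 'I_(n - r) -> R) :
  inblock p q i v -> (0 < v - off p q i)%N ->
  \sum_c U v c * y c = (if (v - off p q i < p i)%N then -1 else 1) *
                       zext y (coff p q i + (v - off p q i).-1).
Proof.
move=> v_in v_pos; rewrite -sum_indicator mulr_sumr; apply: eq_bigr => c _.
by rewrite (U_row_block c v_in v_pos) mulrA.
Qed.

Lemma U_apply_tail (v : 'I_n) (y : 'I_(n - r) -> R) : (totB p q <= v)%N ->
  \sum_c U v c * y c = zext y (totC p q + (v - totB p q)).
Proof. by move=> le_v; rewrite -sum_indicator; apply: eq_bigr => c _; rewrite U_row_tail. Qed.

(* ker U^T is exactly the set of signed block vectors: the block columns of
   U compare each vertex of a block with the first one, the tail columns
   read off the tail. *)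
Lemma kerUT_signed (x : 'I_n -> R) :
  (forall c : 'I_(n - r), \sum_v U v c * x v = 0) <-> signed_block_vector x.
Proof.
have := ncols_eq; split=> [UTx0 | [x_blk x_tail] c].
  split=> [i a lt_a | v le_v].
    have := p_gt0 i; have := cblock_end i => end_i pi_gt0.
    case: (eqVneq a 0%N) => [->|a_neq0]; first by rewrite addn0 pi_gt0.
    have lt_c : (coff p q i + a.-1 < n - r)%N by lia.
    have c_in : incolblock p q i (Ordinal lt_c) by rewrite /incolblock /=; lia.
    have := UTx0 (Ordinal lt_c); rewrite (UT_apply_block x c_in) /=.
    rewrite (_ : ((coff p q i + a.-1 - coff p q i).+1 = a)%N); last by lia.
    by case: (a < p i)%N; lra.
  have lt_c : (totC p q + (v - totB p q) < n - r)%N by have := ltn_ord v; lia.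
  have := UTx0 (Ordinal lt_c); rewrite UT_apply_tail /=; last by lia.
  by rewrite (_ : (totB p q + (totC p q + (v - totB p q) - totC p q) = v)%N) ?zextE //; lia.
case: (ltnP c (totC p q)) => [lt_c|le_c].
  have [i c_in] := cblock_cover lt_c; rewrite (UT_apply_block x c_in).
  have lt_a : ((c - coff p q i).+1 < p i + q i)%N by move: c_in; rewrite /incolblock; lia.
  by rewrite (x_blk i _ lt_a); case: (_ < p i)%N; ring.
rewrite UT_apply_tail //; case: (ltnP (totB p q + (c - totC p q)) n) => [lt_v|le_v].
  by rewrite (zext_ord x lt_v) x_tail //= leq_addr.
by rewrite zext_out.
Qed.

(* U is injective: entry c of y is read off at the vertex of row c + 1 of
   its block, or at the corresponding tail vertex. *)
Lemma U_inj (y : 'I_(n - r) -> R) :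
  (forall v : 'I_n, \sum_c U v c * y c = 0) -> forall c, y c = 0.
Proof.
move=> Uy0 c; have := ncols_eq; have := ltn_ord c => lt_c ncols.
case: (ltnP c (totC p q)) => [lt_cC|le_c].
  have [i c_in] := cblock_cover lt_cC; have := vblock_end i; have := p_gt0 i.
  move: (c_in); rewrite /incolblock => c_in' pi_gt0 end_i.
  have lt_v : (off p q i + (c - coff p q i).+1 < n)%N by lia.
  have v_in : inblock p q i (Ordinal lt_v) by rewrite /inblock /=; lia.
  have := Uy0 (Ordinal lt_v); rewrite (U_apply_block y v_in) /=; last by lia.
  rewrite (_ : (coff p q i + (off p q i + (c - coff p q i).+1 - off p q i).-1 = c)%N); last by lia.
  by rewrite zextE; case: (_ < p i)%N; lra.
have lt_v : (totB p q + (c - totC p q) < n)%N by lia.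
have := Uy0 (Ordinal lt_v); rewrite U_apply_tail /=; last by lia.
by rewrite (_ : (totC p q + (totB p q + (c - totC p q) - totB p q) = c)%N) ?zextE //; lia.
Qed.

Lemma Umat_inj (y : 'cV[R]_(n - r)) : U *m y = 0 -> y = 0.
Proof.
move=> /mulmx_cV_eq0 /U_inj y0.
by apply/matrixP => c j; rewrite ord1 mxE y0.
Qed.

(* The two kernels coincide: both equal the set of signed block vectors. *)
Lemma kerP_kerUT (v : 'cV[R]_n) : P *m v = 0 <-> U^T *m v = 0.
Proof.
rewrite !mulmx_cV_eq0; split=> [Pv0 | UTv0].
  have [x_loop x_edge] := kerP_loop_edge P_sym P_off P_diag P_Delta Pv0.
  have x_sb : signed_block_vector (fun i => v i 0).
    by split; [apply: edge_signs_block | apply: edge_signs_tail].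
  move=> c; apply: etrans _ ((kerUT_signed _).2 x_sb c).
  by apply: eq_bigr => w _; rewrite !mxE.
apply: (signed_block_kerP (x := fun w => v w 0)); apply/kerUT_signed => c.
by apply: etrans _ (UTv0 c); apply: eq_bigr => w _; rewrite !mxE.
Qed.

End BipartiteKernel.

(* S = alpha I + l 11^T: symmetric, and coercive with constant alpha since
   x^T S x = alpha |x|^2 + l (sum_i x_i)^2. *)
Section ShiftedAllOnes.
Variables (R : realFieldType) (n : nat) (alpha l : R).

Lemma Smat_sym : (Smat n alpha l)^T = Smat n alpha l.
Proof. by apply/matrixP => i j; rewrite !mxE eq_sym. Qed.

Lemma Smat_coercive : 0 <= l -> coercive alpha (Smat n alpha l).
Proof.
move=> l_ge0 x; rewrite /Smat qfD qf_scalar qf_const.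
by have := mulr_ge0 l_ge0 (sqr_ge0 (\sum_i x i)); lra.
Qed.

Lemma alpha_gt0_of_bound : (3 <= n)%N -> 0 < l -> (n - 2)%:R * l <= alpha -> 0 < alpha.
Proof.
move=> n_ge3 l_gt0; apply: lt_le_trans; rewrite mulr_gt0 // ltr0n; lia.
Qed.

End ShiftedAllOnes.

Theorem proposition4p7 (R : realFieldType) (n : nat) (l alpha : R)
  (P : 'M[R]_n) (r : nat) (p q : 'I_r -> nat) (s : nat) :
  (3 <= n)%N -> 0 < l -> (n - 2)%:R * l <= alpha ->
  signless_laplacian P ->
  bip_labelling P p q s ->
  let S := Smat n alpha l in
  let U := @Umat R n r p q in
  [/\ S \in unitmx,
      (exists T : R, forall t : R, T < t -> S + t *: P \in unitmx),
      posdef (U^T *m invmx S *m U) &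
      mx_lim_infty (fun t => invmx (S + t *: P))
        (invmx S - invmx S *m U *m invmx (U^T *m invmx S *m U) *m U^T *m invmx S)].
Proof.
move=> n_ge3 l_gt0 le_alpha [P_sym P_off P_diag P_Delta] [p_gt0 n_eq conn cls nonbip] S U.
have a_gt0 := alpha_gt0_of_bound n_ge3 l_gt0 le_alpha.
have S_coer : coercive alpha S by apply: Smat_coercive; apply: ltW.
have P_psd := qf_signless_ge0 P_sym P_off P_diag P_Delta.
have kerPU := kerP_kerUT P_sym P_off P_diag P_Delta p_gt0 n_eq conn cls nonbip.
have U_inj := Umat_inj (R := R) p_gt0 n_eq.
split.
- exact: coercive_unit a_gt0 S_coer.
- by exists 0 => t /ltW t_ge0; exact: resolvent_unit a_gt0 S_coer P_psd t t_ge0.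
- exact: gram_posdef a_gt0 S_coer (Smat_sym _ _ _) U_inj.
- exact: resolvent_lim a_gt0 S_coer (Smat_sym _ _ _) P_psd P_sym kerPU U_inj.
Qed.
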